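(* Let $p,r$ be positive integers and $s=p+2r$. Let $\Phi^*:V^*_{ps}(\mathbb{R})\to\mathbb{C}^{r\times p}$ be the map $\Phi^*(X)=WZ^{-1}$, where for $X=(X_0;X_1;X_2;X_3)$ (blocks of $p,p,r,r$ rows) $Z=X_0+iX_1$ and $W=X_2+iX_3$. Then the complex valued components of $\Phi^*$ form an orthogonal harmonic family of $\mathbf{GL}_p(\mathbb{R})$-invariant functions on $V^*_{ps}(\mathbb{R})$, equipped with the Euclidean metric.
   Context: $U^*_{ps}(\mathbb{R})=\{X\in\mathbb{R}^{(p+s)\times p}: X^tX \text{ invertible}\}$ and $V^*_{ps}(\mathbb{R})=\{X\in U^*_{ps}(\mathbb{R}): \det Z\neq0\}$. $\mathbf{GL}_p(\mathbb{R})$ acts by right multiplication. The Euclidean metric is $\langle X,Y\rangle=\mathrm{trace}(X^tY)$. For a Riemannian manifold $(M,g)$ and complex functions $\phi,\psi$, $\tau(\phi)$ is the Laplace–Beltrami operator (extended complex-linearly) and $\kappa(\phi,\psi)=g(\mathrm{grad}\,\phi,\mathrm{grad}\,\psi)$ with $g$ extended complex-bilinearly. A set $\Omega$ of complex functions is an orthogonal harmonic family if $\tau(\phi)=0$ and $\kappa(\phi,\psi)=0$ for all $\phi,\psi\in\Omega$. *)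

From HB Require Import structures.
From mathcomp Require Import all_boot all_order all_algebra.
From mathcomp Require Import all_classical all_reals all_analysis.
From mathcomp Require Import complex.
Set Implicit Arguments. Unset Strict Implicit. Unset Printing Implicit Defensive.
Import Order.TTheory GRing.Theory Num.Theory.
Local Open Scope ring_scope.
Local Open Scope classical_set_scope.

Section Defs.
Variable R : realType.

(* Standard coordinates of 'M[R]_(m,n) are the entries x_{kl}; the Euclidean
   metric <X,Y> = trace (X^T Y) makes the delta_mx k l an orthonormal basis. *)

Definition rpartial m n (f : 'M[R]_(m, n) -> R) (k : 'I_m) (l : 'I_n)
  (X : 'M[R]_(m, n)) : R :=
  derive1 (fun t : R => f (X + t *: delta_mx k l)) 0.

Definition cpartial m n (f : 'M[R]_(m, n) -> R[i]) (k : 'I_m) (l : 'I_n)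
  (X : 'M[R]_(m, n)) : R[i] :=
  Complex (rpartial (fun Y => complex.Re (f Y)) k l X) (rpartial (fun Y => complex.Im (f Y)) k l X).

(* tension field = Laplace-Beltrami operator of the Euclidean metric,
   extended complex-linearly *)
Definition tau m n (f : 'M[R]_(m, n) -> R[i]) (X : 'M[R]_(m, n)) : R[i] :=
  \sum_(k < m) \sum_(l < n) cpartial (cpartial f k l) k l X.

(* conformality operator kappa(f,g) = g(grad f, grad g), metric extended
   complex-bilinearly *)
Definition kappa m n (f g : 'M[R]_(m, n) -> R[i]) (X : 'M[R]_(m, n)) : R[i] :=
  \sum_(k < m) \sum_(l < n) cpartial f k l X * cpartial g k l X.

Definition orthogonal_harmonic_family m n (U : set 'M[R]_(m, n))
  (Omega : set ('M[R]_(m, n) -> R[i])) : Prop :=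
  forall phi psi, Omega phi -> Omega psi ->
    forall X, U X -> tau phi X = 0 /\ kappa phi psi X = 0.

Variables p r : nat.
(* s = p + 2r, so p + s = p + (p + (r + r)); rows split into blocks p,p,r,r *)
Definition sdim := (p + (r + r))%N.
Definition Mat := 'M[R]_(p + (p + (r + r)), p).

Definition blk0 (X : Mat) : 'M[R]_p := \matrix_(i < p, j < p) X (lshift _ i) j.
Definition blk1 (X : Mat) : 'M[R]_p :=
  \matrix_(i < p, j < p) X (rshift p (lshift (r + r) i)) j.
Definition blk2 (X : Mat) : 'M[R]_(r, p) :=
  \matrix_(i < r, j < p) X (rshift p (rshift p (lshift r i))) j.
Definition blk3 (X : Mat) : 'M[R]_(r, p) :=
  \matrix_(i < r, j < p) X (rshift p (rshift p (rshift r i))) j.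

Definition Zof (X : Mat) : 'M[R[i]]_p :=
  \matrix_(i, j) Complex (blk0 X i j) (blk1 X i j).
Definition Wof (X : Mat) : 'M[R[i]]_(r, p) :=
  \matrix_(i, j) Complex (blk2 X i j) (blk3 X i j).

Definition Ustar : set Mat := [set X | \det (X^T *m X) != 0].
Definition Vstar : set Mat := [set X | Ustar X /\ \det (Zof X) != 0].

Definition Phistar (X : Mat) : 'M[R[i]]_(r, p) := Wof X *m invmx (Zof X).

Definition GL_invariant (f : Mat -> R[i]) : Prop :=
  forall (X : Mat) (A : 'M[R]_p), Vstar X -> \det A != 0 -> f (X *m A) = f X.

End Defs.

(* Phi* is holomorphic in the complex coordinates Z = X0 + i X1 and W = X2 + i X3: moving X
   along the unit direction (k, l) of the block X1 (resp. X3) moves (Z, W) by i times what the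
   same direction of X0 (resp. X2) does.  Hence the directional derivatives of a component phi
   of Phi* satisfy the Cauchy-Riemann relations d'phi = i dphi and d'^2 phi = - d^2 phi, and
   each such pair of directions contributes d^2 phi - d^2 phi = 0 to tau(phi) and
   dphi dpsi + (i dphi)(i dpsi) = 0 to kappa(phi, psi).  The derivatives along a direction are
   read off from the Sherman-Morrison formula for (Z + u E_kl)^-1.  GL_p-invariance holds
   because X -> X A multiplies both Z and W on the right by A. *)

From HB Require Import structures.
From mathcomp Require Import all_boot all_order all_algebra.
From mathcomp Require Import all_classical all_reals all_analysis.
From mathcomp Require Import complex ring lra.
Import Order.TTheory GRing.Theory Num.Theory numFieldNormedType.Exports.
Set Implicit Arguments. Unset Strict Implicit.
Local Open Scope ring_scope.
Local Open Scope classical_set_scope.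
Local Open Scope complex_scope.

Section ComplexValuedDerivative.
Variable R : realType.
Local Notation C := R[i].

Lemma ReD (u v : C) : complex.Re (u + v) = complex.Re u + complex.Re v.
Proof. by case: u; case: v. Qed.

Lemma ImD (u v : C) : complex.Im (u + v) = complex.Im u + complex.Im v.
Proof. by case: u; case: v. Qed.

Lemma Re_sum (I : Type) (s : seq I) (P : pred I) (F : I -> C) :
  complex.Re (\sum_(i <- s | P i) F i) = \sum_(i <- s | P i) complex.Re (F i).
Proof. exact: (big_morph _ ReD). Qed.

Lemma Im_sum (I : Type) (s : seq I) (P : pred I) (F : I -> C) :
  complex.Im (\sum_(i <- s | P i) F i) = \sum_(i <- s | P i) complex.Im (F i).
Proof. exact: (big_morph _ ImD). Qed.

Lemma ReM (u v : C) :
  complex.Re (u * v) = complex.Re u * complex.Re v - complex.Im u * complex.Im v.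
Proof. by case: u; case: v. Qed.

Lemma ImM (u v : C) :
  complex.Im (u * v) = complex.Re u * complex.Im v + complex.Im u * complex.Re v.
Proof. by case: u => ? ?; case: v => ? ? /=; rewrite addrC. Qed.

Lemma mulr_i_pair_eq0 (x y : C) : x * y + ('i * x) * ('i * y) = 0.
Proof. by rewrite mulrACA -expr2 sqr_i mulN1r addrN. Qed.

(* R[i] carries no normed R-module structure, so derivatives of complex-valued functions of a
   real variable are taken componentwise, as in [cpartial]. *)
Definition is_cderive (x : R) (h : R -> C) (d : C) :=
  is_derive x 1 (fun t => complex.Re (h t)) (complex.Re d) /\
  is_derive x 1 (fun t => complex.Im (h t)) (complex.Im d).

Lemma is_derive_congr (f g : R -> R) (x d e : R) :
  (forall t, f t = g t) -> d = e -> is_derive x 1 f d -> is_derive x 1 g e.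
Proof. by move=> /funext -> ->. Qed.

Lemma near_eq_is_cderive (f g : R -> C) (x : R) (d : C) :
  (\forall t \near x, f t = g t) -> is_cderive x f d -> is_cderive x g d.
Proof.
by move=> fg [f1 f2]; split; [apply: near_eq_is_derive f1 | apply: near_eq_is_derive f2];
  apply: filterS fg => t ->.
Qed.

Lemma is_cderive_cst (a : C) (x : R) : is_cderive x (fun=> a) 0.
Proof. by split; apply: is_derive_cst. Qed.

Lemma is_cderiveD f g x df dg : is_cderive x f df -> is_cderive x g dg ->
  is_cderive x (fun t => f t + g t) (df + dg).
Proof.
move=> [f1 f2] [g1 g2]; split.
- by apply: is_derive_congr (is_deriveD f1 g1) => [t|]; rewrite ReD.
- by apply: is_derive_congr (is_deriveD f2 g2) => [t|]; rewrite ImD.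
Qed.

Lemma is_cderive_sum (I : Type) (s : seq I) (F : I -> R -> C) dF x :
  (forall i, is_cderive x (F i) (dF i)) ->
  is_cderive x (fun t => \sum_(i <- s) F i t) (\sum_(i <- s) dF i).
Proof.
move=> dFi; elim: s => [|i s IH].
  rewrite big_nil; apply: near_eq_is_cderive (is_cderive_cst 0 x).
  by apply: filterE => t; rewrite big_nil.
rewrite big_cons; apply: near_eq_is_cderive (is_cderiveD (dFi i) IH).
by apply: filterE => t; rewrite big_cons.
Qed.

Lemma is_cderiveM f g x df dg : is_cderive x f df -> is_cderive x g dg ->
  is_cderive x (fun t => f t * g t) (df * g x + f x * dg).
Proof.
move=> [f1 f2] [g1 g2]; split.
- apply: is_derive_congr (is_deriveB (is_deriveM f1 g1) (is_deriveM f2 g2)).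
    by move=> t; rewrite !fctE; symmetry; apply: ReM.
  by rewrite ReD !ReM /GRing.scale /=; ring.
- apply: is_derive_congr (is_deriveD (is_deriveM f1 g2) (is_deriveM f2 g1)).
    by move=> t; rewrite !fctE; symmetry; apply: ImM.
  by rewrite ImD !ImM /GRing.scale /=; ring.
Qed.

Lemma is_cderive_line (a w : C) (x : R) : is_cderive x (fun t => a + t%:C * w) w.
Proof.
have dreal : is_cderive x (fun t => t%:C) 1.
  by split; [exact: is_derive_id | exact: is_derive_cst].
have := is_cderiveD (is_cderive_cst a x) (is_cderiveM dreal (is_cderive_cst w x)).
by rewrite mulr0 addr0 mul1r add0r.
Qed.

Lemma ReV (u : C) :
  complex.Re u^-1 = complex.Re u / (complex.Re u * complex.Re u + complex.Im u * complex.Im u).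
Proof. by case: u. Qed.

Lemma ImV (u : C) :
  complex.Im u^-1 =
    - (complex.Im u / (complex.Re u * complex.Re u + complex.Im u * complex.Im u)).
Proof. by case: u. Qed.

Lemma sqr_Re_Im_neq0 (u : C) :
  u != 0 -> complex.Re u * complex.Re u + complex.Im u * complex.Im u != 0.
Proof.
case: u => a b /= u0; apply: contra u0; rewrite -!expr2 paddr_eq0 ?sqr_ge0 // !sqrf_eq0.
by case/andP => /eqP-> /eqP->.
Qed.

Lemma is_cderiveV h x dh : h x != 0 -> is_cderive x h dh ->
  is_cderive x (fun t => (h t)^-1) (- dh / (h x * h x)).
Proof.
move=> hx0 [h1 h2]; have dN := is_deriveD (is_deriveM h1 h1) (is_deriveM h2 h2).
have N0 := sqr_Re_Im_neq0 hx0.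
have dNV := @is_deriveV R
  (fun t => complex.Re (h t) * complex.Re (h t) + complex.Im (h t) * complex.Im (h t)) x _ 1 N0 dN.
have sqr_norm_neq0 (a b : R) :
    a * a + b * b != 0 -> (a * a - b * b) ^+ 2 + (a * b + b * a) ^+ 2 != 0.
  by move=> ?; rewrite (_ : _ + _ = (a * a + b * b) ^+ 2) ?expf_neq0 //; ring.
split.
- apply: is_derive_congr (is_deriveM h1 dNV) => [t|]; first by rewrite ?fctE /= ReV.
  move: N0 {hx0 h1 h2 dN dNV}; rewrite ?fctE /GRing.scale /=.
  case: (h x) => a b; case: dh => e k /= N0; field.
  by rewrite N0 sqr_norm_neq0.
- apply: is_derive_congr (is_deriveN (is_deriveM h2 dNV)) => [t|]; first by rewrite ?fctE /= ImV.
  move: N0 {hx0 h1 h2 dN dNV}; rewrite ?fctE /GRing.scale /=.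
  case: (h x) => a b; case: dh => e k /= N0; field.
  by rewrite N0 sqr_norm_neq0.
Qed.

Lemma near0_line_neq0 (w : C) : \forall t \near (0 : R), 1 + t%:C * w != 0.
Proof.
exists (`|complex.Re w| + 1)^-1 => [|t]; first by rewrite /= invr_gt0 ltr_wpDl.
rewrite /= sub0r normrN => t_small; apply/eqP => /(congr1 (@complex.Re R)).
rewrite ReD ReM /= mul0r subr0 => /eqP; rewrite addr_eq0 => /eqP/(congr1 Num.norm).
rewrite normrN normr1 normrM => tw1.
have : `|t| * (`|complex.Re w| + 1) < 1 by rewrite -ltr_pdivlMr ?div1r ?ltr_wpDl.
by rewrite mulrDr mulr1 -tw1; have := normr_ge0 t; lra.
Qed.

Lemma cpartialE m n (f : 'M[R]_(m, n) -> C) k l X d :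
  is_cderive 0 (fun t => f (X + t *: delta_mx k l)) d -> cpartial f k l X = d.
Proof. by case: d => ? ? [? ?]; rewrite /cpartial /rpartial !derive1E !derive_val. Qed.

End ComplexValuedDerivative.

Section RankOneUpdate.
Variable F : fieldType.

Lemma mul_delta_mxE m n q (k : 'I_m) (l : 'I_n) (A : 'M[F]_(n, q)) i j :
  (delta_mx k l *m A) i j = (i == k)%:R * A l j.
Proof.
rewrite mxE (bigD1 l) //= big1 ?addr0 => [|l' /negPf l'l]; rewrite mxE ?eqxx ?andbT //.
by rewrite l'l andbF mul0r.
Qed.

Lemma mulmx_delta_mxE m n q (A : 'M[F]_(m, n)) (k : 'I_n) (l : 'I_q) i j :
  (A *m delta_mx k l) i j = A i k * (j == l)%:R.
Proof.
rewrite mxE (bigD1 k) //= big1 ?addr0 => [|k' /negPf k'k]; rewrite mxE ?eqxx //.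
by rewrite k'k mulr0.
Qed.

Lemma mulmx_delta_mulmxE m n q s (A : 'M[F]_(m, n)) (k : 'I_n) (l : 'I_q)
    (B : 'M[F]_(q, s)) i j :
  (A *m delta_mx k l *m B) i j = A i k * B l j.
Proof.
rewrite -mulmxA mxE (bigD1 k) //= big1 ?addr0 => [|k' /negPf k'k].
  by rewrite mul_delta_mxE eqxx mul1r.
by rewrite mul_delta_mxE k'k mul0r mulr0.
Qed.

Lemma delta_mulmx_delta m n (k : 'I_m) (l : 'I_n) (A : 'M[F]_(n, m)) :
  delta_mx k l *m A *m delta_mx k l = A l k *: delta_mx k l.
Proof.
apply/matrixP => i j; rewrite mulmx_delta_mxE mul_delta_mxE !mxE.
by case: (i == k); case: (j == l); rewrite ?mulr1 ?mulr0 ?mul1r ?mul0r.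
Qed.

Lemma mulmx1_invmx n (A B : 'M[F]_n) : A *m B = 1%:M -> invmx A = B.
Proof.
by move=> AB; have [uA _] := mulmx1_unit AB; rewrite -[RHS](mulKmx uA) AB mulmx1.
Qed.

Section ShermanMorrison.
Variables (n : nat) (Z : 'M[F]_n) (u : F) (k l : 'I_n).
Hypotheses (Z_unit : Z \in unitmx) (denom_neq0 : 1 + u * invmx Z l k != 0).

Lemma mulmx_add_delta_sherman :
  (Z + u *: delta_mx k l) *m
    (invmx Z - (u / (1 + u * invmx Z l k)) *: (invmx Z *m delta_mx k l *m invmx Z))
  = 1%:M.
Proof.
set Zi := invmx Z; set E := delta_mx k l; set s := u / _.
rewrite mulmxDl !mulmxBr mulmxV // -!scalemxAr -!scalemxAl !mulmxA mulmxV // mul1mx.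
rewrite delta_mulmx_delta -scalemxAl !scalerA.
have us : u = s + s * (u * Zi l k) by rewrite -[s in s + _]mulr1 -mulrDr /s divfK.
by rewrite [in u *: _]us scalerDl mulrA addrK subrK.
Qed.

Lemma unitmx_add_delta : Z + u *: delta_mx k l \in unitmx.
Proof. by have [] := mulmx1_unit mulmx_add_delta_sherman. Qed.

Lemma invmx_add_delta :
  invmx (Z + u *: delta_mx k l) =
    invmx Z - (u / (1 + u * invmx Z l k)) *: (invmx Z *m delta_mx k l *m invmx Z).
Proof. exact: mulmx1_invmx mulmx_add_delta_sherman. Qed.

End ShermanMorrison.
End RankOneUpdate.

Section PhistarCalculus.
Variables (R : realType) (p r : nat).
Local Notation C := R[i].
Local Notation Mat := (Mat R p r).
Local Notation rowZre k := (lshift (p + (r + r)) k).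
Local Notation rowZim k := (rshift p (lshift (r + r) k)).
Local Notation rowWre a := (rshift p (rshift p (lshift r a))).
Local Notation rowWim a := (rshift p (rshift p (rshift r a))).

Lemma Zof_addZ (X D : Mat) (t : R) : Zof (X + t *: D) = Zof X + t%:C *: Zof D.
Proof. by apply/matrixP => i j; rewrite !mxE /=; congr (_ +i* _); ring. Qed.

Lemma Wof_addZ (X D : Mat) (t : R) : Wof (X + t *: D) = Wof X + t%:C *: Wof D.
Proof. by apply/matrixP => i j; rewrite !mxE /=; congr (_ +i* _); ring. Qed.

Lemma Zof_delta_Zre k l : Zof (delta_mx (rowZre k) l : Mat) = delta_mx k l.
Proof.
apply/matrixP => i j; rewrite !mxE eq_lshift eq_rlshift /=.
by case: (i == k); case: (j == l).
Qed.

Lemma Zof_delta_Zim k l : Zof (delta_mx (rowZim k) l : Mat) = 'i *: delta_mx k l.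
Proof.
apply/matrixP => i j; rewrite !mxE eq_lrshift eq_rshift eq_lshift /=.
by case: (i == k); case: (j == l); rewrite /= ?mulr1 ?mulr0.
Qed.

Lemma Zof_delta_Wre a l : Zof (delta_mx (rowWre a) l : Mat) = 0.
Proof. by apply/matrixP => i j; rewrite !mxE eq_lrshift eq_rshift eq_lrshift. Qed.

Lemma Zof_delta_Wim a l : Zof (delta_mx (rowWim a) l : Mat) = 0.
Proof. by apply/matrixP => i j; rewrite !mxE eq_lrshift eq_rshift eq_lrshift. Qed.

Lemma Wof_delta_Zre k l : Wof (delta_mx (rowZre k) l : Mat) = 0.
Proof. by apply/matrixP => i j; rewrite !mxE eq_rlshift eq_rlshift. Qed.

Lemma Wof_delta_Zim k l : Wof (delta_mx (rowZim k) l : Mat) = 0.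
Proof. by apply/matrixP => i j; rewrite !mxE eq_rshift eq_rlshift eq_rshift eq_rlshift. Qed.

Lemma Wof_delta_Wre a l : Wof (delta_mx (rowWre a) l : Mat) = delta_mx a l.
Proof.
apply/matrixP => i j; rewrite !mxE !eq_rshift eq_lshift eq_rlshift /=.
by case: (i == a); case: (j == l).
Qed.

Lemma Wof_delta_Wim a l : Wof (delta_mx (rowWim a) l : Mat) = 'i *: delta_mx a l.
Proof.
apply/matrixP => i j; rewrite !mxE !eq_rshift eq_lrshift /=.
by case: (i == a); case: (j == l); rewrite /= ?mulr1 ?mulr0.
Qed.

Lemma Zof_mulmx (X : Mat) (A : 'M[R]_p) :
  Zof (X *m A) = Zof X *m map_mx (real_complex R) A.
Proof.
apply/matrixP => i j; apply/eqP; rewrite eq_complex !mxE Re_sum Im_sum /=.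
by apply/andP; split; apply/eqP; apply: eq_bigr => m _; rewrite !mxE /=; ring.
Qed.

Lemma Wof_mulmx (X : Mat) (A : 'M[R]_p) :
  Wof (X *m A) = Wof X *m map_mx (real_complex R) A.
Proof.
apply/matrixP => i j; apply/eqP; rewrite eq_complex !mxE Re_sum Im_sum /=.
by apply/andP; split; apply/eqP; apply: eq_bigr => m _; rewrite !mxE /=; ring.
Qed.

Lemma Phistar_mulmx (X : Mat) (A : 'M[R]_p) :
  Zof X \in unitmx -> A \in unitmx -> Phistar (X *m A) = Phistar X.
Proof.
move=> uZ uA; rewrite -(map_unitmx (real_complex R)) in uA.
rewrite /Phistar Zof_mulmx Wof_mulmx.
have -> : invmx (Zof X *m map_mx (real_complex R) A) =
          invmx (map_mx (real_complex R) A) *m invmx (Zof X).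
  by apply: mulmx1_invmx; rewrite mulmxA mulmxK ?mulmxV.
by rewrite mulmxA mulmxK.
Qed.


Section Line.
Variables (K : 'I_(p + (p + (r + r)))) (l k : 'I_p) (c : C) (dW : 'M[C]_(r, p)).
Hypotheses (ZofE : Zof (delta_mx K l : Mat) = c *: delta_mx k l)
           (WofE : Wof (delta_mx K l : Mat) = dW).
Local Notation Zi X := (invmx (Zof X)).

Lemma near_invmx_Zof_line (X : Mat) : Zof X \in unitmx ->
  \forall t \near (0 : R),
    Zof (X + t *: delta_mx K l) \in unitmx /\
    Zi (X + t *: delta_mx K l) =
      Zi X - (t%:C * c / (1 + t%:C * c * Zi X l k)) *: (Zi X *m delta_mx k l *m Zi X).
Proof.
move=> uZ; apply: filterS (near0_line_neq0 (c * Zi X l k)) => t; rewrite mulrA => nz.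
rewrite Zof_addZ ZofE scalerA.
by split; [apply: unitmx_add_delta | apply: invmx_add_delta].
Qed.

Lemma is_cderive_invmx_Zof (X : Mat) m j : Zof X \in unitmx ->
  is_cderive 0 (fun t => Zi (X + t *: delta_mx K l) m j) (- c * Zi X m k * Zi X l j).
Proof.
move=> uZ; have dquot := is_cderiveM (is_cderive_line 0 c 0)
  (is_cderiveV _ (is_cderive_line 1 (c * Zi X l k) 0)).
rewrite rmorph0 !(mul0r, addr0, add0r) invr1 mulr1 in dquot.
have {}dquot := dquot (oner_neq0 _).
have := is_cderiveD (is_cderive_cst (Zi X m j) 0)
  (is_cderiveM dquot (is_cderive_cst (- (Zi X m k * Zi X l j)) 0)).
rewrite rmorph0 !(mul0r, mulr0, addr0, add0r) mulrN -mulNr mulrA => dZi.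
apply: near_eq_is_cderive dZi; apply: filterS (near_invmx_Zof_line uZ) => t [_ ->].
by rewrite 3!mxE mulmx_delta_mulmxE add0r mulrN [t%:C * (c * _)]mulrA.
Qed.

Lemma is_cderive_Phistar (X : Mat) b j : Zof X \in unitmx ->
  is_cderive 0 (fun t => Phistar (X + t *: delta_mx K l) b j)
    ((dW *m Zi X) b j - c * Phistar X b k * Zi X l j).
Proof.
move=> uZ; have := is_cderive_sum (index_enum _) (fun m =>
  is_cderiveM (is_cderive_line (Wof X b m) (dW b m) 0) (is_cderive_invmx_Zof m j uZ)).
rewrite scale0r addr0 big_split /= rmorph0.
have -> : \sum_m (Wof X b m + 0 * dW b m) * (- c * Zi X m k * Zi X l j) =
          - (c * Phistar X b k * Zi X l j).
  by rewrite /Phistar mxE mulr_sumr mulr_suml -sumrN; apply: eq_bigr => m _; ring.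
rewrite [(dW *m _) _ _]mxE => dPhi; apply: near_eq_is_cderive dPhi; apply: filterE => t.
by rewrite /Phistar mxE Wof_addZ WofE; apply: eq_bigr => m _; rewrite !mxE.
Qed.

Lemma cpartial_Phistar (X : Mat) b j : Zof X \in unitmx ->
  cpartial (fun Y => Phistar Y b j) K l X =
    (dW *m Zi X) b j - c * Phistar X b k * Zi X l j.
Proof. by move=> uZ; apply/cpartialE/is_cderive_Phistar. Qed.

Lemma cpartial2_Phistar (X : Mat) b j : Zof X \in unitmx ->
  cpartial (cpartial (fun Y => Phistar Y b j) K l) K l X =
    - (c *+ 2) * (dW *m Zi X) b k * Zi X l j
    + (c ^+ 2 *+ 2) * Phistar X b k * Zi X l k * Zi X l j.
Proof.
move=> uZ; apply: cpartialE.
have := is_cderive_sum (index_enum _) (fun m =>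
  is_cderiveM (is_cderive_cst (dW b m) 0) (is_cderive_invmx_Zof m j uZ)).
have := is_cderiveM (is_cderiveM (is_cderive_cst (- c) 0) (is_cderive_Phistar b k uZ))
  (is_cderive_invmx_Zof l j uZ).
move=> dPhiZi /is_cderiveD /(_ dPhiZi); rewrite scale0r addr0.
rewrite [V in is_cderive _ _ V -> _](_ : _ = - (c *+ 2) * (dW *m Zi X) b k * Zi X l j
    + (c ^+ 2 *+ 2) * Phistar X b k * Zi X l k * Zi X l j); last first.
  rewrite (_ : \sum_m _ = - c * (dW *m Zi X) b k * Zi X l j); first by ring.
  by rewrite mxE mulr_sumr mulr_suml; apply: eq_bigr => m _; ring.
move=> dF; apply: near_eq_is_cderive dF.
apply: filterS (near_invmx_Zof_line uZ) => t [uZt _].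
by rewrite cpartial_Phistar // [(dW *m _) _ _]mxE !mulNr.
Qed.

End Line.

Definition rotated_direction (K K' : 'I_(p + (p + (r + r)))) (l : 'I_p) :=
  exists k c dW,
    [/\ Zof (delta_mx K l : Mat) = c *: delta_mx k l, Wof (delta_mx K l : Mat) = dW,
        Zof (delta_mx K' l : Mat) = ('i * c) *: delta_mx k l
      & Wof (delta_mx K' l : Mat) = 'i *: dW].

Lemma rotated_direction_Z k l : rotated_direction (rowZre k) (rowZim k) l.
Proof.
exists k, 1, 0; rewrite scale1r mulr1 scaler0.
by split; rewrite ?Zof_delta_Zre ?Wof_delta_Zre ?Zof_delta_Zim ?Wof_delta_Zim.
Qed.

Lemma rotated_direction_W a l : rotated_direction (rowWre a) (rowWim a) l.
Proof.
exists l, 0, (delta_mx a l); rewrite mulr0 scale0r.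
by split; rewrite ?Zof_delta_Wre ?Wof_delta_Wre ?Zof_delta_Wim ?Wof_delta_Wim.
Qed.

Section RotatedDirection.
Variables (K K' : 'I_(p + (p + (r + r)))) (l : 'I_p).
Hypothesis rotKK' : rotated_direction K K' l.

Lemma cpartial_Phistar_rotated (X : Mat) b j : Zof X \in unitmx ->
  cpartial (fun Y => Phistar Y b j) K' l X =
    'i * cpartial (fun Y => Phistar Y b j) K l X /\
  cpartial (cpartial (fun Y => Phistar Y b j) K' l) K' l X =
    - cpartial (cpartial (fun Y => Phistar Y b j) K l) K l X.
Proof.
move=> uZ; have [k [c [dW [ZK WK ZK' WK']]]] := rotKK'; split.
- apply: etrans (cpartial_Phistar ZK' WK' b j uZ) _.
  by rewrite (cpartial_Phistar ZK WK b j uZ) -scalemxAl mxE; ring.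
- apply: etrans (cpartial2_Phistar ZK' WK' b j uZ) _.
  rewrite (cpartial2_Phistar ZK WK b j uZ) -scalemxAl mxE.
  (* [sqr_i] states its ['i] through another instance path, which [ring] would
     treat as a different atom. *)
  have i2 : 'i ^+ 2 = -1 :> C := sqr_i R.
  by rewrite -[RHS]mulN1r -i2; ring.
Qed.

Lemma laplacian_pair_Phistar (X : Mat) b j : Zof X \in unitmx ->
  cpartial (cpartial (fun Y => Phistar Y b j) K l) K l X +
  cpartial (cpartial (fun Y => Phistar Y b j) K' l) K' l X = 0.
Proof.
move=> uZ; have [_ E] := cpartial_Phistar_rotated b j uZ.
exact: etrans (congr1 (+%R _) E) (addrN _).
Qed.

Lemma gradient_pair_Phistar (X : Mat) b j b' j' : Zof X \in unitmx ->
  cpartial (fun Y => Phistar Y b j) K l X * cpartial (fun Y => Phistar Y b' j') K l X +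
  cpartial (fun Y => Phistar Y b j) K' l X * cpartial (fun Y => Phistar Y b' j') K' l X = 0.
Proof.
move=> uZ; have [E _] := cpartial_Phistar_rotated b j uZ.
have [E' _] := cpartial_Phistar_rotated b' j' uZ.
exact: etrans (congr1 (+%R _) (congr2 *%R E E')) (mulr_i_pair_eq0 _ _).
Qed.

End RotatedDirection.
End PhistarCalculus.

Arguments rotated_direction_Z {R p r}.
Arguments rotated_direction_W {R p r}.

Lemma sum_blocks_eq0 (V : zmodType) m n q (F : 'I_(m + (m + (n + n))) -> 'I_q -> V) :
  (forall k l, F (lshift (m + (n + n)) k) l + F (rshift m (lshift (n + n) k)) l = 0) ->
  (forall a l,
     F (rshift m (rshift m (lshift n a))) l + F (rshift m (rshift m (rshift n a))) l = 0) ->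
  \sum_K \sum_l F K l = 0.
Proof.
move=> FZ FW; rewrite !big_split_ord /= addrA -!big_split /=.
rewrite !big1 ?addr0 // => i _; rewrite -big_split big1 // => l _.
  exact: FW.
exact: FZ.
Qed.

Theorem proposition9p2 (R : realType) (p r : nat) (hp : (0 < p)%N) (hr : (0 < r)%N) :
  let Omega : set (Mat R p r -> R[i]) :=
    [set phi | exists (a : 'I_r) (j : 'I_p), phi = fun X => Phistar X a j] in
  (forall phi, Omega phi -> GL_invariant phi) /\
  orthogonal_harmonic_family (Vstar (R:=R) (p:=p) (r:=r)) Omega.
Proof.
move=> Omega; split.
  move=> _ [a [j ->]] X A [_ detZ] detA /=.
  by rewrite Phistar_mulmx // unitmxE unitfE.
move=> _ _ [a [j ->]] [a' [j' ->]] X [_ detZ].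
have uZ : Zof X \in unitmx by rewrite unitmxE unitfE.
split; apply: sum_blocks_eq0 => [k l|a0 l].
- exact (laplacian_pair_Phistar (rotated_direction_Z k l) a j uZ).
- exact (laplacian_pair_Phistar (rotated_direction_W a0 l) a j uZ).
- exact (gradient_pair_Phistar (rotated_direction_Z k l) a j a' j' uZ).
- exact (gradient_pair_Phistar (rotated_direction_W a0 l) a j a' j' uZ).
Qed.
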